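(* For every integer $n>1$, \[ \omega(n-1)=\sum_{\substack{m+k=n\\ m\ge1,\ k\ge0}}\mu(m)\,\Omega_m(k), \] where $\mu$ is the Möbius function.
   Context: $\omega:\mathbb{Z}\to\mathbb{Z}$ is defined by $\omega(0)=1$; $\omega(m)=(-1)^j$ if $m=\frac{3j^2\pm j}{2}$ for some integer $j\ge1$; $\omega(m)=0$ otherwise (in particular for $m<0$). For $m\ge1$ and integer $k$, $\Omega_m(k)=\sum_{j\ge0}\omega(k-jm)=\omega(k)+\omega(k-m)+\omega(k-2m)+\cdots$. *)

From mathcomp Require Import all_boot all_order all_algebra.
Set Implicit Arguments. Unset Strict Implicit. Unset Printing Implicit Defensive.
Import Order.TTheory GRing.Theory Num.Theory.
Local Open Scope ring_scope.

(* Pentagonal-number indicator on naturals: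
   omega_nat 0 = 1; omega_nat m = (-1)^j if 2m = 3j^2 + j or 2m = 3j^2 - j
   for some j >= 1 (such j satisfies j <= m, and is unique since the
   generalized pentagonal numbers are distinct); 0 otherwise. *)
Definition omega_nat (m : nat) : int :=
  if m == 0%N then 1 else
  match [seq j <- iota 1 m |
           (3 * j ^ 2 + j == 2 * m)%N || (3 * j ^ 2 - j == 2 * m)%N] with
  | j :: _ => (-1) ^+ j
  | [::] => 0
  end.

Definition omega (m : int) : int :=
  match m with
  | Posz n => omega_nat n
  | Negz _ => 0
  end.

(* Omega_m(k) = sum_{j >= 0} omega(k - j m).  For m >= 1 the terms with
   j > |k| have negative argument, hence vanish; we sum j = 0 .. |k|. *)
Definition Omega (m : nat) (k : int) : int :=
  \sum_(0 <= j < `|k|%N.+1) omega (k - (j * m)%:Z).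

Definition moebius (m : nat) : int :=
  if all (fun p => logn p m == 1%N) (primes m)
  then (-1) ^+ size (primes m) else 0.

From mathcomp Require Import all_boot all_order all_algebra zify.
Import Order.TTheory GRing.Theory Num.Theory.
Local Open Scope ring_scope.

(* This is Moebius inversion and uses nothing about omega except that it
   vanishes at negative arguments, so that Omega_m(n - m) is the sum of
   omega(n - x) over the multiples x of m in [1, n], so after exchanging the
   two sums the right-hand side becomes the sum over x in [1, n] of
   omega(n - x) * (sum of mu(m) over the divisors m of x), and the inner sum
   is 1 for x = 1 and 0 otherwise. *)

Lemma big_nat_trunc (R : nmodType) (F : nat -> R) (P : pred nat) m n1 n2 :
    (m <= n1 <= n2)%N -> (forall x, (n1 <= x < n2)%N -> P x -> F x = 0) ->
  \sum_(m <= x < n2 | P x) F x = \sum_(m <= x < n1 | P x) F x.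
Proof.
move=> /andP[mn1 n12] F0; rewrite (big_cat_nat mn1 n12) /= [X in _ + X]big_nat_cond.
by rewrite [X in _ + X]big1 ?addr0 // => x /andP[/F0].
Qed.

Lemma sum_multiples (R : nmodType) (G : nat -> R) p K : (0 < p)%N ->
  \sum_(1 <= x < (K * p).+1 | (p %| x)%N) G x = \sum_(1 <= j < K.+1) G (j * p)%N.
Proof.
move=> p0; elim: K => [|K IH]; first by rewrite mul0n !big_geq.
have KpS : (K * p < K.+1 * p)%N by rewrite ltn_pmul2r.
have last_block : \sum_((K * p).+1 <= x < (K.+1 * p).+1 | (p %| x)%N) G x = G (K.+1 * p)%N.
  rewrite big_mkcond big_nat_recr //= dvdn_mull // big_nat_cond big1 ?add0r // => x.
  rewrite andbT => /andP[Kpx xKp]; case: ifP => // /dvdnP[q xE].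
  by move: Kpx xKp; rewrite xE ltn_pmul2r // ltn_pmul2r //; lia.
by rewrite big_nat_recr //= -IH -last_block -big_cat_nat // ltnW.
Qed.

Lemma moebius_primeM p m : prime p -> (0 < m)%N ->
  moebius (p * m) = if (p %| m)%N then 0 else - moebius m.
Proof.
move=> p_pr m_gt0; have pm_gt0 : (0 < p * m)%N by rewrite muln_gt0 prime_gt0.
have lognpM q : logn q (p * m) = ((q == p) + logn q m)%N.
  by rewrite (lognM _ (prime_gt0 p_pr) m_gt0) logn_prime.
rewrite /moebius; have [p_dv_m | p_ndv_m] := boolP (p %| m)%N.
  case: ifP => // /allP/(_ p); rewrite mem_primes p_pr pm_gt0 dvdn_mulr // lognpM eqxx.
  have : (0 < logn p m)%N by rewrite logn_gt0 mem_primes p_pr m_gt0 p_dv_m.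
  by move=> logn_pos /(_ isT) /eqP; lia.
have p_nin : p \notin primes m by rewrite mem_primes (negbTE p_ndv_m) !andbF.
have primes_pM : perm_eq (primes (p * m)) (p :: primes m).
  apply: uniq_perm; rewrite /= ?p_nin ?primes_uniq // => q.
  by rewrite (primesM _ (prime_gt0 p_pr) m_gt0) primes_prime // !inE.
rewrite (perm_all _ primes_pM) (perm_size primes_pM) /= lognpM eqxx.
rewrite (_ : logn p m = 0%N); last by apply/eqP; rewrite -leqn0 leqNgt logn_gt0.
rewrite (@eq_in_all _ _ (fun q => logn q m == 1%N)); last first.
  by move=> q q_in; rewrite lognpM (_ : (q == p) = false) //; apply: contraNF p_nin => /eqP <-.
by rewrite /=; case: ifP => _; rewrite ?exprS ?mulN1r ?oppr0.
Qed.

Lemma sum_moebius_dvd d : (0 < d)%N ->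
  \sum_(1 <= m < d.+1 | (m %| d)%N) moebius m = (d == 1%N)%:R.
Proof.
move=> d_gt0; have [-> | d_neq1] := eqVneq d 1%N; first by rewrite big_mkcond big_nat1.
have d_gt1 : (1 < d)%N by rewrite ltn_neqAle eq_sym d_neq1.
set p := pdiv d; have p_pr : prime p := pdiv_prime d_gt1.
set e := (d %/ p)%N; have dE : d = (e * p)%N by rewrite divnK // pdiv_dvd.
have e_gt0 : (0 < e)%N by move: d_gt0; rewrite dE muln_gt0 => /andP[].
have coprime_ndvd m : ~~ (p %| m)%N -> coprime m p by rewrite coprime_sym prime_coprime.
(* Divisors of d = e p prime to p are those of e; the others are the p j with
   j | e, and mu(p j) = - mu(j) or 0. *)
rewrite (bigID (fun m => p %| m)%N) /=.
have -> : \sum_(1 <= m < d.+1 | (m %| d)%N && (p %| m)%N) moebius m =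
          - \sum_(1 <= m < e.+1 | (m %| e)%N && ~~ (p %| m)%N) moebius m.
  rewrite big_mkcondl dE sum_multiples ?prime_gt0 // -sumrN [RHS]big_mkcond /=.
  apply: eq_big_nat => j /andP[j_gt0 _].
  rewrite dvdn_pmul2r ?prime_gt0 // mulnC moebius_primeM //.
  by case: (j %| e)%N; case: (p %| j)%N; rewrite ?oppr0.
have -> : \sum_(1 <= m < d.+1 | (m %| d)%N && ~~ (p %| m)%N) moebius m =
          \sum_(1 <= m < e.+1 | (m %| e)%N && ~~ (p %| m)%N) moebius m.
  have m_dvd_e m : ~~ (p %| m)%N -> (m %| d)%N = (m %| e)%N.
    by move=> /coprime_ndvd m_cop; rewrite dE Gauss_dvdl.
  rewrite (@big_nat_trunc _ _ _ _ e.+1); last first.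
  - move=> m /andP[e_lt_m _] /andP[m_dvd p_ndvd]; move: m_dvd.
    by rewrite m_dvd_e // => /(dvdn_leq e_gt0); rewrite leqNgt e_lt_m.
  - by rewrite /= ltnS dE leq_pmulr ?prime_gt0.
  by apply: eq_bigl => m; case: (boolP (p %| m)%N) => p_m; rewrite ?andbF ?m_dvd_e.
by rewrite addNr.
Qed.

Lemma sum_moebius_multiples (R : ringType) (G : nat -> R) N : (0 < N)%N ->
  \sum_(1 <= m < N.+1) (moebius m)%:~R * \sum_(1 <= x < N.+1 | (m %| x)%N) G x = G 1%N.
Proof.
move=> N_gt0.
under eq_bigr do rewrite big_distrr big_mkcond /=.
rewrite exchange_big_nat /=.
transitivity (\sum_(1 <= x < N.+1) (x == 1%N)%:R * G x).
  apply: eq_big_nat => x /andP[x_gt0 x_le_N].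
  rewrite -big_mkcond -mulr_suml -rmorph_sum (@big_nat_trunc _ _ _ _ x.+1).
  - by rewrite sum_moebius_dvd //; case: (x == 1%N).
  - by rewrite ltnS.
  by move=> m /andP[x_lt_m _] /(dvdn_leq x_gt0); rewrite leqNgt x_lt_m.
rewrite big_ltn // eqxx mul1r big_nat_cond big1 ?addr0 // => x /andP[/andP[x_gt1 _] _].
by rewrite gtn_eqF // mul0r.
Qed.

Lemma omega_neg a b : (a < b)%N -> omega (a%:Z - b%:Z) = 0.
Proof. by move=> a_lt_b; rewrite (_ : a%:Z - b%:Z = Negz (b - a).-1) //; lia. Qed.

Lemma Omega_sum_multiples n m : (0 < m <= n)%N ->
  Omega m (n - m)%:Z = \sum_(1 <= x < n.+1 | (m %| x)%N) omega (n%:Z - x%:Z).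
Proof.
case/andP=> m_gt0 m_le_n.
transitivity (\sum_(1 <= j < (n - m).+2) omega (n%:Z - (j * m)%:Z)).
  by rewrite big_add1 /Omega; apply: eq_bigr => j _; congr omega; lia.
rewrite -(@sum_multiples _ (fun x => omega (n%:Z - x%:Z))) //.
rewrite (@big_nat_trunc _ _ _ _ n.+1) //; first by nia.
by move=> x /andP[n_lt_x _] _; apply: omega_neg.
Qed.

Theorem mainTheorem7 (n : nat) (hn : (1 < n)%N) :
  omega (n.-1)%:Z = \sum_(1 <= m < n.+1) moebius m * Omega m (n - m)%:Z.
Proof.
have n_gt0 : (0 < n)%N by apply: ltnW.
transitivity (omega (n%:Z - 1%:Z)); first by congr omega; lia.
rewrite -(@sum_moebius_multiples _ (fun x => omega (n%:Z - x%:Z)) n n_gt0).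
apply: eq_big_nat => m /andP[m_gt0 m_le_n].
by rewrite intz Omega_sum_multiples // m_gt0.
Qed.
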